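(* Let $n\ge1$ and $F:\mathbb{F}_{2^n}\to\mathbb{F}_{2^n}$ any function. Then $F$ is an o-polynomial if and only if both $$\sum_{b\in\mathbb{F}_{2^n}^*}\sum_{v\in\mathbb{F}_{2^n}} W_F^2(bv,v) = (2^n-1)2^{2n+1}$$ and $$\sum_{b\in \mathbb{F}_{2^n}^*}\ \sum_{v_1,v_2\in \mathbb{F}_{2^n}}W_F(bv_1,v_1)W_F(bv_2,v_2)W_F(b(v_1+v_2),v_1+v_2)=(2^n-1)2^{3n+2}$$ hold.
   Context: $tr_n$ denotes the absolute trace from $\mathbb{F}_{2^n}$ to $\mathbb{F}_2$, $\mathbb{F}_{2^n}^*=\mathbb{F}_{2^n}\setminus\{0\}$, and $W_F(u,v)=\sum_{x\in\mathbb{F}_{2^n}}(-1)^{tr_n(vF(x))+tr_n(ux)}$. In $PG(2,2^n)$, a hyperoval is a set of $2^n+2$ points no three of which lie on a common line. A function (polynomial) $F$ over $\mathbb{F}_{2^n}$ is an o-polynomial if $\{(1,t,F(t)) : t\in\mathbb{F}_{2^n}\}\cup\{(0,1,0),(0,0,1)\}$ is a hyperoval of $PG(2,2^n)$. Equivalently (known fact), for every $a\in\mathbb{F}_{2^n}$ and $b\in\mathbb{F}_{2^n}^*$ the equation $F(x)+bx=a$ has $0$ or $2$ solutions in $\mathbb{F}_{2^n}$. *)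

(* F_{2^n} is modelled as an arbitrary finite field K with #|K| = 2^n. *)
From HB Require Import structures.
From mathcomp Require Import all_boot all_order all_algebra all_field.
Set Implicit Arguments. Unset Strict Implicit. Unset Printing Implicit Defensive.
Import GRing.Theory.
Local Open Scope ring_scope.

(* absolute trace tr_n : F_{2^n} -> F_2 (values 0 or 1 in K) *)
Definition tr (K : fieldType) (n : nat) (x : K) : K := \sum_(i < n) x ^+ (2 ^ i).

Definition sgnF (K : fieldType) (a : K) : int := if a == 0 then 1 else -1.

Definition walsh (K : finFieldType) (n : nat) (F : K -> K) (u v : K) : int :=
  \sum_(x : K) sgnF (tr n (v * F x) + tr n (u * x)).

(* Homogeneous coordinates of points of PG(2,q): nonzero row vectors in K^3. *)
Definition vec3 (K : fieldType) (a b c : K) : 'rV[K]_3 :=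
  \row_(j < 3) [:: a; b; c]`_j.

Definition collinear (K : fieldType) (p q r : 'rV[K]_3) : bool :=
  (\rank (col_mx p (col_mx q r)) < 3)%N.

Definition same_point (K : fieldType) (p q : 'rV[K]_3) : bool :=
  (\rank (col_mx p q) < 2)%N.

Definition hyperoval (K : finFieldType) (S : {set 'rV[K]_3}) : Prop :=
  [/\ (forall p, p \in S -> p != 0),
      (forall p q, p \in S -> q \in S -> p != q -> ~~ same_point p q),
      #|S| = (#|K| + 2)%N &
      (forall p q r, p \in S -> q \in S -> r \in S ->
         p != q -> q != r -> p != r -> ~~ collinear p q r)].

Definition opoly_set (K : finFieldType) (F : K -> K) : {set 'rV[K]_3} :=
  [set vec3 1 t (F t) | t : K] :|: [set vec3 0 1 0; vec3 0 0 1].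

Definition is_opoly (K : finFieldType) (F : K -> K) : Prop :=
  hyperoval (opoly_set F).

From HB Require Import structures.
From mathcomp Require Import all_boot all_order all_algebra all_field.
From mathcomp Require Import ring zify.
Set Implicit Arguments. Unset Strict Implicit. Unset Printing Implicit Defensive.
Import GRing.Theory Num.Theory.
Local Open Scope ring_scope.

(* Let N_b(z) be the number of x with F x + b x = F z + b z.  The secant through
   the points of the graph over a and x has "slope" c exactly when
   F x + c x = F a + c a, and it meets the line through (0,1,0) and (0,0,1) in a
   point determined by c; so F is an o-polynomial iff from every graph point the
   q - 1 secants have pairwise distinct nonzero slopes, i.e. iff N_b(z) = 2 for
   all b <> 0 and all z.  With chi y = (-1)^(tr y), orthogonality of additive
   characters gives sum_v W_F(bv,v)^2 = q sum_z N_b(z) and turns the triple sum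
   into q^2 sum_z N_b(z)^2.  The two identities thus say that N_b(z), over
   b <> 0, has mean 2 and mean square 4, i.e. it is constantly 2. *)

Lemma fibres_card1P (T U : finType) (f : T -> U) (D : {set T}) (S : {set U}) :
  #|D| = #|S| ->
  (forall y, y \in S -> #|[set x in D | f x == y]| = 1%N) <->
  {in D &, injective f} /\ {in D, forall x, f x \in S}.
Proof.
move=> cardDS; split=> [fib1 | [injf fDS] y yS].
  have fDS : {in D, forall x, f x \in S}.
    suff <- : [set x in D | f x \in S] = D by move=> x; rewrite inE => /andP[].
    apply/eqP; rewrite eqEcard cardDS; apply/andP; split.
      by apply/subsetP => x; rewrite inE => /andP[].
    rewrite -[X in (_ <= X)%N]sum1_card (partition_big f (fun y => y \in S)) => [|x].
      rewrite -sum1_card; apply/eq_leq/eq_bigr => y yS.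
      rewrite -{1}(fib1 y yS) -sum1_card; apply: eq_bigl => x; rewrite !inE.
      by case: (f x =P y) => [->|]; rewrite ?yS ?andbT ?andbF.
    by rewrite inE => /andP[].
  split=> // x x' xD x'D fxx'.
  have /eqP/cards1P[x0 fib] := fib1 _ (fDS x xD).
  have : x' \in [set y in D | f y == f x] by rewrite inE x'D fxx' eqxx.
  have : x \in [set y in D | f y == f x] by rewrite inE xD eqxx.
  by rewrite fib => /set1P-> /set1P->.
have imD : f @: D = S.
  apply/eqP; rewrite eqEcard card_in_imset // cardDS leqnn andbT.
  by apply/subsetP => _ /imsetP[x xD ->]; apply: fDS.
move: yS; rewrite -imD => /imsetP[x0 x0D ->].
apply/eqP/cards1P; exists x0; apply/setP => x; rewrite !inE.
apply/andP/eqP => [[xD /eqP]|->]; [exact: injf | by rewrite x0D eqxx].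
Qed.

Lemma sum_sqr_constP (R : realDomainType) (I : finType) (P : {pred I}) (N : I -> R) (k : R) :
  (\sum_(i in P) N i = k * #|P|%:R /\ \sum_(i in P) N i ^+ 2 = k ^+ 2 * #|P|%:R) <->
  {in P, forall i, N i = k}.
Proof.
split=> [[sumN sumN2] | Nk]; last first.
  split; last rewrite (eq_bigr (fun=> k ^+ 2)) => [|i /Nk->//].
    by rewrite (eq_bigr (fun=> k)) => [|i /Nk//]; rewrite sumr_const mulr_natr.
  by rewrite sumr_const mulr_natr.
have var0 : \sum_(i in P) (N i - k) ^+ 2 = 0.
  have -> : \sum_(i in P) (N i - k) ^+ 2 =
            \sum_(i in P) N i ^+ 2 - (k *+ 2) * \sum_(i in P) N i + \sum_(i in P) k ^+ 2.
    rewrite mulr_sumr -sumrB -big_split /=; apply: eq_bigr => i _; ring.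
  by rewrite sumN sumN2 sumr_const -mulr_natr; ring.
move=> i Pi; apply/eqP; rewrite -subr_eq0 -sqrf_eq0; apply/eqP.
by move/psumr_eq0P: var0 => -> // j _; apply: sqr_ge0.
Qed.

Lemma mulfI_iff (R : idomainType) (c x y : R) : c != 0 -> c * x = c * y <-> x = y.
Proof. by move=> c0; split=> [/(mulfI c0)|->]. Qed.

Section ProjectivePlane.
Variable K : fieldType.
Implicit Types (a b c : K) (p q r : 'rV[K]_3).

Lemma vec3_inj a1 a2 a3 b1 b2 b3 :
  vec3 a1 a2 a3 = vec3 b1 b2 b3 -> [/\ a1 = b1, a2 = b2 & a3 = b3].
Proof.
move=> e; have ej j := congr1 (fun M : 'rV[K]_3 => M 0 j) e.
by move: (ej 0) (ej 1) (ej 2); rewrite !mxE.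
Qed.

Lemma vec3_eq0 a1 a2 a3 : (vec3 a1 a2 a3 == 0) = [&& a1 == 0, a2 == 0 & a3 == 0].
Proof.
have vec3_000 : vec3 0 0 0 = 0 :> 'rV[K]_3.
  by apply/matrixP => i j; rewrite !mxE; case: j => [[|[|[]]]].
rewrite -vec3_000; apply/eqP/and3P => [/vec3_inj[-> -> ->]|[/eqP-> /eqP-> /eqP->]] //.
Qed.

Lemma col_mx_vec3E a1 a2 a3 b1 b2 b3 c1 c2 c3 (i : 'I_(1 + (1 + 1))) (j : 'I_3) :
  col_mx (vec3 a1 a2 a3) (col_mx (vec3 b1 b2 b3) (vec3 c1 c2 c3)) i j
  = nth 0 (nth [::] [:: [:: a1; a2; a3]; [:: b1; b2; b3]; [:: c1; c2; c3]] i) j.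
Proof.
rewrite mxE; case: splitP => k ik; first by rewrite mxE ik; case: k ik => [[]].
by rewrite mxE; case: splitP => l il; rewrite mxE ik; case: l il => [[]] //= _ ->.
Qed.

Lemma det_vec3 a1 a2 a3 b1 b2 b3 c1 c2 c3 :
  \det (col_mx (vec3 a1 a2 a3) (col_mx (vec3 b1 b2 b3) (vec3 c1 c2 c3)) : 'M_3)
  = a1 * (b2 * c3 - b3 * c2) - a2 * (b1 * c3 - b3 * c1) + a3 * (b1 * c2 - b2 * c1).
Proof.
set A := col_mx _ _; have AE := col_mx_vec3E a1 a2 a3 b1 b2 b3 c1 c2 c3.
rewrite -/A in AE; clearbody A.
rewrite (expand_det_row _ 0) !big_ord_recl big_ord0 /cofactor.
rewrite !(expand_det_row _ 0) !big_ord_recl !big_ord0 /cofactor !det_mx11.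
by rewrite !mxE !AE /= /bump /=; ring.
Qed.

Lemma rank_col_mx3 p q r : \rank (col_mx p (col_mx q r)) = \rank (p + q + r)%MS.
Proof. by rewrite -addsmxE -addsmxA (adds_eqmx (eqmx_refl p) (addsmxE q r)). Qed.

Lemma collinearCl p q r : collinear p q r = collinear q p r.
Proof. by rewrite /collinear !rank_col_mx3 (addsmxC p q). Qed.

Lemma collinearCr p q r : collinear p q r = collinear p r q.
Proof. by rewrite /collinear !rank_col_mx3 -!addsmxA (addsmxC q r). Qed.

Lemma collinear_det p q r : collinear p q r = (\det (col_mx p (col_mx q r) : 'M_3) == 0).
Proof.
rewrite -[_ == 0]negbK -unitfE -unitmxE -row_free_unit /row_free /collinear ltn_neqAle.
by rewrite rank_leq_row andbT.
Qed.

Lemma same_point_collinear p q r : same_point p q -> collinear p q r.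
Proof.
rewrite /same_point /collinear rank_col_mx3 -addsmxE => pq.
apply: leq_ltn_trans (mxrank_adds_leqif _ _).1 _.
by have := rank_leq_row r; lia.
Qed.
End ProjectivePlane.

Definition no_three_collinear (K : finFieldType) (S : {set 'rV[K]_3}) :=
  forall p q r, p \in S -> q \in S -> r \in S ->
    p != q -> q != r -> p != r -> ~~ collinear p q r.

Section OPolynomial.
Variables (K : finFieldType) (F : K -> K).

Definition affine_point t : 'rV[K]_3 := vec3 1 t (F t).
Definition e2 : 'rV[K]_3 := vec3 0 1 0.
Definition e3 : 'rV[K]_3 := vec3 0 0 1.

Lemma opoly_set_cases p :
  p \in opoly_set F -> (exists t, p = affine_point t) \/ p = e2 \/ p = e3.
Proof.
rewrite !inE => /orP[/imsetP[t _ ->]|/orP[]/eqP->];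
  by [left; exists t | right; left | right; right].
Qed.

Lemma affine_point_in t : affine_point t \in opoly_set F.
Proof. by rewrite !inE; apply/orP; left; apply/imsetP; exists t. Qed.

Lemma e2_in : e2 \in opoly_set F.
Proof. by rewrite !inE eqxx orbT. Qed.

Lemma affine_point_eq a b : (affine_point a == affine_point b) = (a == b).
Proof. by apply/eqP/eqP => [/vec3_inj[]|->]. Qed.

Lemma affine_point_neq_e2 a : (affine_point a == e2) = false.
Proof. by apply/eqP => /vec3_inj[/eqP]; rewrite oner_eq0. Qed.

Lemma affine_point_neq_e3 a : (affine_point a == e3) = false.
Proof. by apply/eqP => /vec3_inj[/eqP]; rewrite oner_eq0. Qed.

Lemma e2_neq_e3 : (e2 == e3) = false.
Proof. by apply/eqP => /vec3_inj[_ /eqP]; rewrite oner_eq0. Qed.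

Lemma card_opoly_set : #|opoly_set F| = (#|K| + 2)%N.
Proof.
rewrite cardsU card_imset => [|a b /eqP]; last by rewrite affine_point_eq => /eqP.
have -> : [set affine_point t | t : K] :&: [set e2; e3] = set0.
  apply/setP => p; rewrite !inE; apply/negbTE/negP => /andP[/imsetP[t _ ->]].
  by rewrite affine_point_neq_e2 affine_point_neq_e3.
by rewrite cards0 subn0 cards2 e2_neq_e3 cardT -cardE.
Qed.

Lemma collinear_affine3 a b c :
  collinear (affine_point a) (affine_point b) (affine_point c)
  = ((b - a) * (F c - F a) - (c - a) * (F b - F a) == 0).
Proof. by rewrite collinear_det det_vec3; congr (_ == 0); ring. Qed.

Lemma collinear_affine2_e2 a b :
  collinear (affine_point a) (affine_point b) e2 = (F a == F b).
Proof. by rewrite collinear_det det_vec3 -[F a == F b]subr_eq0; congr (_ == 0); ring. Qed.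

Lemma collinear_affine2_e3 a b :
  collinear (affine_point a) (affine_point b) e3 = (a == b).
Proof.
by rewrite collinear_det det_vec3 [a == b]eq_sym -[b == a]subr_eq0; congr (_ == 0); ring.
Qed.

Lemma collinear_affine_e2_e3 a : collinear (affine_point a) e2 e3 = false.
Proof.
by rewrite collinear_det det_vec3 (_ : _ + _ = 1) ?oner_eq0 //; ring.
Qed.

Lemma hyperoval_opoly_setP : is_opoly F <-> no_three_collinear (opoly_set F).
Proof.
split=> [[_ _ _ //] | noncol]; split=> [p | p q pS qS pq | | //]; last exact: card_opoly_set.
  by case/opoly_set_cases => [[t ->] | [->|->]]; rewrite vec3_eq0 ?oner_eq0 ?andbF.
have : (0 < #|opoly_set F :\: [set p; q]|)%N.
  rewrite cardsD card_opoly_set subn_gt0.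
  apply: leq_ltn_trans (subset_leq_card (subsetIr _ _)) _.
  have : (0 < #|K|)%N by apply/card_gt0P; exists 0.
  by rewrite cards2 pq; lia.
case/card_gt0P => r; rewrite in_setD in_set2 negb_or => /andP[/andP[rp rq] rS].
rewrite ![r == _]eq_sym in rp rq.
exact: contra (@same_point_collinear _ p q r) (noncol p q r pS qS rS pq rq rp).
Qed.

Ltac solve_up_to_collinear_perm tac :=
  first [ tac | rewrite collinearCl; tac | rewrite collinearCr; tac
        | rewrite collinearCl collinearCr; tac | rewrite collinearCr collinearCl; tac
        | rewrite collinearCl collinearCr collinearCl; tac ].

Lemma no_three_collinear_opoly_setP :
  no_three_collinear (opoly_set F) <->
  injective F /\ (forall a b c, a != b -> b != c -> a != c ->
                   ~~ collinear (affine_point a) (affine_point b) (affine_point c)).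
Proof.
split=> [noncol | [injF noncol3] p q r].
  split=> [a b Fab | a b c ab bc ac];
    last by apply: noncol; rewrite ?affine_point_in ?affine_point_eq.
  apply/eqP/negPn/negP => ab.
  by have := noncol _ _ _ (affine_point_in a) (affine_point_in b) e2_in;
    rewrite affine_point_eq !affine_point_neq_e2 collinear_affine2_e2 Fab eqxx => /(_ ab isT isT).
case/opoly_set_cases => [[a ->]|[]->]; case/opoly_set_cases => [[b ->]|[]->];
  case/opoly_set_cases => [[c ->]|[]->];
  rewrite ?affine_point_eq ?(eq_sym e2) ?(eq_sym e3) ?affine_point_neq_e2
          ?affine_point_neq_e3 ?e2_neq_e3 ?eqxx //;
  move=> pq qr pr; solve_up_to_collinear_perm
    ltac:(by [ apply: noncol3 | rewrite collinear_affine2_e2 (inj_eq injF)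
             | rewrite collinear_affine2_e3 | rewrite collinear_affine_e2_e3 ]).
Qed.

Definition Fb b x := F x + b * x.
Definition fibre b z := [set x | Fb b x == Fb b z].
(* minus the slope of the secant through (a, F a) and (x, F x), to match [Fb] *)
Definition chord a x := (F a - F x) / (x - a).

Lemma Fb_eq_chord c a x : x != a -> (Fb c x == Fb c a) = (chord a x == c).
Proof.
move=> xa; have xa0 : x - a != 0 by rewrite subr_eq0.
rewrite [RHS]eq_sym /chord -[RHS](inj_eq (mulIf xa0)) divfK // -subr_eq0 -[RHS]subr_eq0.
by congr (_ == 0); rewrite /Fb; ring.
Qed.

Lemma card_fibre c a :
  #|fibre c a| = #|[set x in [set~ a] | chord a x == c]|.+1.
Proof.
have -> : fibre c a = a |: [set x in [set~ a] | chord a x == c].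
  apply/setP => x; rewrite !inE; have [->|xa] := eqVneq x a; first by rewrite eqxx.
  exact: Fb_eq_chord.
by rewrite cardsU1 !inE eqxx.
Qed.

Lemma collinear_affine3_chord a b c : b != a -> c != a ->
  collinear (affine_point a) (affine_point b) (affine_point c) = (chord a b == chord a c).
Proof.
move=> ba ca; rewrite collinear_affine3 /chord eqr_div ?subr_eq0 //.
by rewrite -subr_eq0 -[RHS]subr_eq0; congr (_ == 0); ring.
Qed.

Lemma chord_eq0 a b : b != a -> (chord a b == 0) = (F a == F b).
Proof. by move=> ba; rewrite /chord mulf_eq0 invr_eq0 !subr_eq0 (negbTE ba) orbF. Qed.

Lemma opoly_chordP : is_opoly F <->
  forall a, {in [set~ a] &, injective (chord a)} /\ {in [set~ a], forall x, chord a x \in [set~ 0]}.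
Proof.
rewrite hyperoval_opoly_setP no_three_collinear_opoly_setP; split=> [[injF noncol3] a | chordP].
  split=> [b c | b]; rewrite !inE => ba; last by rewrite chord_eq0 // (inj_eq injF) eq_sym.
  move=> ca /eqP; apply: contraTeq => bc.
  by rewrite -collinear_affine3_chord //; apply: noncol3; rewrite // eq_sym.
split=> [a b Fab | a b c ab bc ac].
  apply/eqP/negPn/negP => ab; have [_ /(_ b)] := chordP a.
  by rewrite !inE eq_sym ab chord_eq0 1?eq_sym // Fab eqxx => /(_ isT).
have [injc _] := chordP a; rewrite collinear_affine3_chord 1?eq_sym //.
apply: contra bc => /eqP/injc.
by rewrite !inE ![_ == a]eq_sym ab ac => /(_ isT isT) ->.
Qed.

Lemma opoly_fibreP : is_opoly F <-> forall b z, b != 0 -> #|fibre b z| = 2%N.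
Proof.
rewrite opoly_chordP; split=> [chordP b z b0 | fibre2 a].
  have cardC1_eq : #|[set~ z]| = #|[set~ (0 : K)]| by rewrite !cardsC1.
  by rewrite card_fibre ((fibres_card1P _ cardC1_eq).2 (chordP z)) // !inE.
apply/fibres_card1P; first by rewrite !cardsC1.
move=> c; rewrite !inE => c0.
by have := fibre2 c a c0; rewrite card_fibre => -[].
Qed.
End OPolynomial.

Section Walsh.
Variables (n : nat) (K : finFieldType).
Hypotheses (n_gt0 : (0 < n)%N) (cardK : #|K| = (2 ^ n)%N).

Lemma pchar2 : 2 \in [pchar K].
Proof. exact: card_finPcharP cardK _. Qed.

Lemma addrr_pchar2 (x : K) : x + x = 0.
Proof. by rewrite -mulr2n -mulr_natl (pcharf0 pchar2) mul0r. Qed.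

Lemma exprD_pow2 (x y : K) i : (x + y) ^+ (2 ^ i) = x ^+ (2 ^ i) + y ^+ (2 ^ i).
Proof. by apply: exprDn_pchar; rewrite (eq_pnat _ (pcharf_eq pchar2)) pnatX pnat_id. Qed.

Lemma trD (x y : K) : tr n (x + y) = tr n x + tr n y.
Proof. by rewrite /tr -big_split; apply: eq_bigr => i _; rewrite exprD_pow2. Qed.

Lemma tr0 : tr n (0 : K) = 0.
Proof. by rewrite /tr big1 // => i _; rewrite expr0n expn_eq0. Qed.

Lemma tr_sqr (x : K) : tr n x ^+ 2 = tr n x.
Proof.
have -> : tr n x ^+ 2 = \sum_(i < n) x ^+ (2 ^ i.+1).
  rewrite /tr; elim: n => [|m IH]; first by rewrite !big_ord0 expr0n.
  rewrite !big_ord_recr /= -IH.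
  have := exprD_pow2 (\sum_(i < m) x ^+ (2 ^ i)) (x ^+ (2 ^ m)) 1; rewrite expn1 => ->.
  by rewrite -exprM expnS mulnC.
rewrite /tr; case: n n_gt0 cardK => // m _ cardK'.
by rewrite big_ord_recr big_ord_recl /= -cardK' expf_card addrC.
Qed.

Lemma tr_eq01 (x : K) : (tr n x == 0) || (tr n x == 1).
Proof. by rewrite -[tr n x == 1]subr_eq0 -mulf_eq0 mulrBr mulr1 -expr2 tr_sqr subrr. Qed.

Lemma tr_neq0 : exists y : K, tr n y != 0.
Proof.
pose p : {poly K} := \sum_(i < n) 'X^(2 ^ i).
have p_tr y : p.[y] = tr n y.
  by rewrite /p horner_sum; apply: eq_bigr => i _; rewrite hornerXn.
have p_neq0 : p != 0.
  apply/eqP => /(congr1 (fun q : {poly K} => q`_1)).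
  rewrite coef_sum coef0; case: n n_gt0 => // m _.
  rewrite big_ord_recl /= coefXn expn0 eqxx big1 ?addr0; first by move/eqP; rewrite oner_eq0.
  move=> i _; rewrite coefXn /bump /= add1n expnS.
  by case: (2 ^ i)%N (expn_gt0 2 i) => // k _; rewrite mulnS; case: k.
have size_p : (size p <= (2 ^ n.-1).+1)%N.
  apply: leq_trans (size_sum _ _ _) _; apply/bigmax_leqP => i _.
  by rewrite size_polyXn ltnS leq_exp2l // -ltnS prednK.
have [y Hy|tr0_all] := pickP (fun y : K => tr n y != 0); first by exists y.
have roots_p : all (root p) (enum K).
  by apply/allP => y _; rewrite /root p_tr; apply/negbFE/tr0_all.
have := leq_trans (max_poly_roots p_neq0 roots_p (enum_uniq K)) size_p.
rewrite -cardE cardK; case: n n_gt0 => // m _ /=.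
by rewrite expnS ltnS; have := expn_gt0 2 m; lia.
Qed.

Definition chi (y : K) : int := sgnF (tr n y).

Lemma chiD x y : chi (x + y) = chi x * chi y.
Proof.
rewrite /chi trD /sgnF.
by case/orP: (tr_eq01 x) => /eqP->; case/orP: (tr_eq01 y) => /eqP->;
  rewrite ?addr0 ?add0r ?addrr_pchar2 ?eqxx ?oner_eq0.
Qed.

Lemma chi0 : chi 0 = 1.
Proof. by rewrite /chi tr0 /sgnF eqxx. Qed.

Lemma sum_chi_mul a : \sum_(v : K) chi (v * a) = if a == 0 then #|K|%:Z else 0.
Proof.
have [->|a0] := eqVneq a 0.
  by rewrite (eq_bigr (fun=> 1)) => [|v _]; rewrite ?mulr0 ?chi0 // sumr_const natz.
have -> : \sum_(v : K) chi (v * a) = \sum_(w : K) chi w.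
  by rewrite [RHS](reindex_inj (mulIf a0)).
have [y try0] := tr_neq0.
have chiy : chi y = -1 by rewrite /chi /sgnF (negbTE try0).
have sum_opp : \sum_(w : K) chi w = (\sum_(w : K) chi w) * chi y.
  rewrite mulr_suml (reindex_inj (addIr y)) /=.
  by apply: eq_bigr => w _; rewrite chiD.
by apply/eqP; rewrite -eqNr -mulrN1 -chiy -sum_opp.
Qed.

Variable F : K -> K.

Lemma walsh_diagE b v : walsh n F (b * v) v = \sum_(x : K) chi (v * Fb F b x).
Proof. by apply: eq_bigr => x _; rewrite -trD /chi /Fb mulrDr mulrCA mulrA. Qed.

Lemma sum_walsh_chi b z :
  \sum_(v : K) walsh n F (b * v) v * chi (v * Fb F b z) = #|K|%:Z * #|fibre F b z|%:Z.
Proof.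
under eq_bigr do rewrite walsh_diagE mulr_suml.
rewrite exchange_big /=.
under eq_bigr do under eq_bigr do rewrite -chiD -mulrDr.
under eq_bigr do rewrite sum_chi_mul addr_eq0 (oppr_pchar2 pchar2).
by rewrite -big_mkcond sumr_const -mulr_natr natz /fibre cardsE.
Qed.

Lemma sum_walsh_sqr b :
  \sum_(v : K) walsh n F (b * v) v ^+ 2 = #|K|%:Z * \sum_(z : K) #|fibre F b z|%:Z.
Proof.
under eq_bigr do rewrite expr2 {2}walsh_diagE mulr_sumr.
by rewrite exchange_big mulr_sumr; apply: eq_bigr => z _; apply: sum_walsh_chi.
Qed.

Lemma sum_walsh_triple b :
  \sum_(v1 : K) \sum_(v2 : K)
     walsh n F (b * v1) v1 * walsh n F (b * v2) v2 * walsh n F (b * (v1 + v2)) (v1 + v2)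
  = #|K|%:Z ^+ 2 * \sum_(z : K) #|fibre F b z|%:Z ^+ 2.
Proof.
have split_chi v1 v2 :
    walsh n F (b * v1) v1 * walsh n F (b * v2) v2 * walsh n F (b * (v1 + v2)) (v1 + v2)
    = \sum_(z : K) (walsh n F (b * v1) v1 * chi (v1 * Fb F b z))
                  * (walsh n F (b * v2) v2 * chi (v2 * Fb F b z)).
  rewrite (walsh_diagE b (v1 + v2)) mulr_sumr; apply: eq_bigr => z _.
  by rewrite mulrDl chiD; ring.
under eq_bigr do under eq_bigr do rewrite split_chi.
under eq_bigr do rewrite exchange_big /=.
rewrite exchange_big mulr_sumr; apply: eq_bigr => z _ /=.
by rewrite -big_distrlr /= sum_walsh_chi; ring.
Qed.
End Walsh.

Lemma card_nonzero_first (K : finFieldType) :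
  #|[pred bz : K * K | bz.1 != 0]| = ((#|K| - 1) * #|K|)%N.
Proof.
rewrite -cardsE (_ : [set bz : K * K | bz.1 != 0] = setX [set~ 0] setT).
  by rewrite cardsX cardsC1 cardsT subn1.
by apply/setP => -[b z]; rewrite !inE andbT.
Qed.

Theorem mainTheorem7 (n : nat) (K : finFieldType) (F : K -> K) :
  (1 <= n)%N -> #|K| = (2 ^ n)%N ->
  is_opoly F <->
  ((\sum_(b : K | b != 0) \sum_(v : K) (walsh n F (b * v) v) ^+ 2
      = ((2 ^ n - 1) * 2 ^ (2 * n + 1))%N%:Z)
   /\
   (\sum_(b : K | b != 0) \sum_(v1 : K) \sum_(v2 : K)
       walsh n F (b * v1) v1 * walsh n F (b * v2) v2
       * walsh n F (b * (v1 + v2)) (v1 + v2)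
      = ((2 ^ n - 1) * 2 ^ (3 * n + 2))%N%:Z)).
Proof.
move=> n_gt0 cardK; pose P := [pred bz : K * K | bz.1 != 0].
have pairE (G : K -> K -> int) :
    \sum_(b | b != 0) \sum_(z : K) G b z = \sum_(bz in P) G bz.1 bz.2.
  by rewrite pair_big; apply: eq_bigl => -[b z]; rewrite andbT.
have rhs2 : ((2 ^ n - 1) * 2 ^ (2 * n + 1))%N%:Z = #|K|%:Z * (2 * #|P|%:R).
  rewrite card_nonzero_first cardK expnD mul2n -addnn expnD -!natz -!natrM.
  by congr _%:R; move: (2 ^ n - 1)%N (2 ^ n)%N => a q; ring.
have rhs3 : ((2 ^ n - 1) * 2 ^ (3 * n + 2))%N%:Z = #|K|%:Z ^+ 2 * (2 ^+ 2 * #|P|%:R).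
  rewrite card_nonzero_first cardK expnD mulSn mul2n -addnn !expnD -!natz -!natrX -!natrM.
  by congr _%:R; move: (2 ^ n - 1)%N (2 ^ n)%N => a q; ring.
have q_neq0 : #|K|%:Z != 0 by rewrite cardK eqz_nat expn_eq0.
rewrite (eq_bigr _ (fun b _ => sum_walsh_sqr n_gt0 cardK F b)).
rewrite (eq_bigr _ (fun b _ => sum_walsh_triple n_gt0 cardK F b)).
rewrite -!mulr_sumr !pairE rhs2 rhs3 !mulfI_iff ?expf_neq0 //.
rewrite opoly_fibreP (sum_sqr_constP P (fun bz => #|fibre F bz.1 bz.2|%:Z) 2).
split=> [fibre2 [b z] /= b0 | fibre2 b z b0]; first by rewrite fibre2.
by have /= [] := fibre2 (b, z) b0.
Qed.
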